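(* In the Setting, under (SA1)–(SA2), let $\mathcal I\in\wp_k[n]$, distinct $i,j\in\mathcal I$, distinct $\alpha,\beta\in\mathcal I^{\mathtt C}$ satisfy $h(\mathcal I)h(\mathcal I^{ij}_{\alpha\beta})h(\mathcal I^i_\alpha)h(\mathcal I^i_\beta)h(\mathcal I^j_\alpha)h(\mathcal I^j_\beta)\neq0$. If $B^{ij}_{\alpha\beta}$ is a perfect square in $\Lambda$, then $Y(\mathcal I)^{ij}_{\alpha\beta}\in\mathbb C$.
   Context: Setting. $d\ge1$, $1\le k\le n$; $\mathbf t=(t_1,\dots,t_d)$ indeterminates; $\Lambda:=\mathbb C[t_1^{\pm1},\dots,t_d^{\pm1}]$ (a UFD whose units are exactly the elements $c\,\mathbf t^{\mathbf e}$, $c\in\mathbb C\setminus\{0\}$, $\mathbf e\in\mathbb Z^d$), $\mathbb F$ its fraction field, $\overline{\mathbb F}$ an algebraic closure. $[n]=\{1,\dots,n\}$, $\wp_k[n]$ the $k$-subsets. For $\mathcal I\in\wp_k[n]$: $\mathcal I^{\mathtt C}=[n]\setminus\mathcal I$; $\mathcal I^i_\alpha=(\mathcal I\setminus\{i\})\cup\{\alpha\}$; $\mathcal I^{ij}_{\alpha\beta}=(\mathcal I\setminus\{i,j\})\cup\{\alpha,\beta\}$. $\mathbf L$ ($k\times n$), $\mathbf R$ ($n\times k$) with entries in $\overline{\mathbb F}$; $\Delta_{\mathbf L}(\mathcal I)$, $\Delta_{\mathbf R}(\mathcal I)$ maximal minors on columns, resp. rows, $\mathcal I$; $h(\mathcal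 I):=\Delta_{\mathbf L}(\mathcal I)\Delta_{\mathbf R}(\mathcal I)$; $\mathfrak G:=\{\mathcal I:\Delta_{\mathbf L}(\mathcal I)\ne0\}$. (SA1) all $\Delta_{\mathbf R}(\mathcal I)\ne0$; (SA2) $h(\mathcal I)$ is a unit of $\Lambda$ for every $\mathcal I\in\mathfrak G$. $Y(\mathcal I)^{ij}_{\alpha\beta}:=-\mathrm{sign}[(i-\alpha)(i-\beta)(j-\alpha)(j-\beta)]\frac{\Delta_{\mathbf R}(\mathcal I^i_\alpha)\Delta_{\mathbf R}(\mathcal I^j_\beta)}{\Delta_{\mathbf R}(\mathcal I^i_\beta)\Delta_{\mathbf R}(\mathcal I^j_\alpha)}$. $A^{ij}_{\alpha\beta}:=h(\mathcal I)h(\mathcal I^{ij}_{\alpha\beta})-h(\mathcal I^i_\alpha)h(\mathcal I^j_\beta)-h(\mathcal I^i_\beta)h(\mathcal I^j_\alpha)$, $B^{ij}_{\alpha\beta}:=(A^{ij}_{\alpha\beta})^2-4h(\mathcal I^i_\alpha)h(\mathcal I^j_\beta)h(\mathcal I^i_\beta)h(\mathcal I^j_\alpha)$. *)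

From HB Require Import structures.
From mathcomp Require Import all_boot all_order all_algebra.
From mathcomp Require Import reals.
From mathcomp Require Import complex.
From mathcomp Require Import mpoly.
Set Implicit Arguments. Unset Strict Implicit. Unset Printing Implicit Defensive.
Import Order.TTheory GRing.Theory Num.Theory.
Local Open Scope ring_scope.

Definition CC (R : realType) : fieldType := R[i].

Section Setting.
Variables (R : realType) (d : nat) (K : closedFieldType).
Variables (iota : {rmorphism CC R -> K}) (t : 'I_d -> K).

Definition evt (p : {mpoly CC R[d]}) : K := mmap iota t p.

(* x lies in (the image of) Lambda = C[t_1^{+-1},...,t_d^{+-1}] inside K. *)
Definition inLambda (x : K) : Prop :=
  exists (p : {mpoly CC R[d]}) (e : nat), x = evt p / (\prod_(l < d) t l) ^+ e.

Definition unitLambda (x : K) : Prop :=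
  [/\ inLambda x, x != 0 & inLambda x^-1].

Definition inC (x : K) : Prop := exists c : CC R, x = iota c.

(* K is an algebraic closure of Frac(Lambda): K is algebraically closed,
   t_1..t_d are algebraically independent over C, and every element of K
   is algebraic over Lambda. *)
Definition is_alg_closure_of_FracLambda : Prop :=
  injective evt /\
  forall x : K, exists q : {poly K},
      [/\ q != 0, forall l : nat, inLambda q`_l & root q x].
End Setting.

Section Minors.
Variables (K : fieldType) (k n : nat).

Definition ith (I : {set 'I_n}) (b : 'I_k) : option 'I_n :=
  nth None [seq Some i | i <- enum I] b.

Definition DeltaL (L : 'M[K]_(k, n)) (I : {set 'I_n}) : K :=
  \det (\matrix_(a < k, b < k)
          (if ith I b is Some j then L a j else 0)).

Definition DeltaR (Rm : 'M[K]_(n, k)) (I : {set 'I_n}) : K :=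
  \det (\matrix_(a < k, b < k)
          (if ith I a is Some j then Rm j b else 0)).

Definition hh (L : 'M[K]_(k, n)) (Rm : 'M[K]_(n, k)) (I : {set 'I_n}) : K :=
  DeltaL L I * DeltaR Rm I.

Definition swap1 (I : {set 'I_n}) (i al : 'I_n) : {set 'I_n} := al |: (I :\ i).
Definition swap2 (I : {set 'I_n}) (i j al be : 'I_n) : {set 'I_n} :=
  al |: (be |: (I :\: [set i; j])).

Definition sgnY (i j al be : 'I_n) : int :=
  Num.sg ((Posz i - Posz al) * (Posz i - Posz be) * (Posz j - Posz al) * (Posz j - Posz be)).

Definition Ycoef (Rm : 'M[K]_(n, k)) (I : {set 'I_n}) (i j al be : 'I_n) : K :=
  - (sgnY i j al be)%:~R *
  (DeltaR Rm (swap1 I i al) * DeltaR Rm (swap1 I j be)) /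
  (DeltaR Rm (swap1 I i be) * DeltaR Rm (swap1 I j al)).

Definition Acoef L Rm I (i j al be : 'I_n) : K :=
  hh L Rm I * hh L Rm (swap2 I i j al be)
  - hh L Rm (swap1 I i al) * hh L Rm (swap1 I j be)
  - hh L Rm (swap1 I i be) * hh L Rm (swap1 I j al).

Definition Bcoef L Rm I (i j al be : 'I_n) : K :=
  (Acoef L Rm I i j al be) ^+ 2
  - 4%:R * hh L Rm (swap1 I i al) * hh L Rm (swap1 I j be)
         * hh L Rm (swap1 I i be) * hh L Rm (swap1 I j al).
End Minors.

From HB Require Import structures.
From mathcomp Require Import all_boot all_order all_algebra.
From mathcomp Require Import perm reals complex ssrcomplements mpoly.
From mathcomp Require Import ring zify.
Set Implicit Arguments. Unset Strict Implicit. Unset Printing Implicit Defensive.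
Import Order.TTheory GRing.Theory Num.Theory.
Local Open Scope ring_scope.

(* Write Delta_X = DeltaR Rm X and l_X = DeltaL L X for the six index sets
   X = I, I^{ij}_{al be}, I^i_al, I^j_be, I^i_be, I^j_al.
   1. Linear algebra: the three-term Grassmann-Pluecker relation
        Delta_I Delta_{ij,al be} = c1 Delta_{i al} Delta_{j be}
                                   + c2 Delta_{i be} Delta_{j al}
      holds with signs c1, c2 depending only on the index sets, hence for
      the row minors of Rm and of L^T alike.  It is derived from the
      relation omega12 omega34 - omega13 omega24 + omega14 omega23 = 0 for
      the alternating form omega(x, y) = det(W; x; y), which has rank <= 2.
   2. Laurent polynomials: Lambda is a subring of K containing C, and if x
      and 1 + x are both units of Lambda then x lies in C (a unit is a
      monomial term, and so are p and T^a + p only if p is a multiple of T^a).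
   3. With h_X = l_X Delta_X, u = h_{i al} h_{j be}, v = h_{i be} h_{j al},
      w = l_{i al} l_{j be} Delta_{i be} Delta_{j al} and
      z = l_{i be} l_{j al} Delta_{i al} Delta_{j be}, step 1 gives
      h_I h_{ij,al be} = u + v +- (w + z), wz = uv and B = (w - z)^2; the
      square root places w, z in Lambda, and the unit criterion of step 2
      applied to x = +-w/u shows that u/w, which is Y up to sign, is constant. *)

Section MonomialFactors.
Variables (R : idomainType) (n : nat).
Implicit Types (p q : {mpoly R[n]}) (m : 'X_{1..n}).

Lemma mcoeff_mlastM p q :
  (p * q)@_(mlast p + mlast q) = p@_(mlast p) * q@_(mlast q).
Proof.
have [->|nz_p] := eqVneq p 0; first by rewrite mcoeff0 !mul0r mcoeff0.
have [->|nz_q] := eqVneq q 0; first by rewrite mcoeff0 !mulr0 mcoeff0.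
rewrite mpolyME (bigD1_seq (mlast p, mlast q)) /=; first last.
- by rewrite allpairs_uniq => // -[? ?] [].
- by rewrite allpairs_f // !mlast_supp.
rewrite mcoeffD mcoeffZ mcoeffX eqxx mulr1 big_seq_cond raddf_sum /= big1 ?addr0 //.
case=> m1 m2; rewrite in_allpairs //= -andbA => /and3P[m1p m2q ne_last].
rewrite mcoeffZ mcoeffX; move/mlast_lemc: m1p; move/mlast_lemc: m2q.
rewrite le_eqVlt => /predU1P[m2E|lt2]; last first.
  by move/lemc_lt_add/(_ lt2)/gt_eqF ->; rewrite mulr0.
move: ne_last; rewrite -m2E xpair_eqE eqxx andbT.
rewrite le_eqVlt eq_sym => /negbTE -> /= lt1.
by rewrite (gt_eqF (ltmc_le_add lt1 (lexx _))) mulr0.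
Qed.

Lemma mpolyX_neq0 m : 'X_[m] != 0 :> {mpoly R[n]}.
Proof.
by apply/eqP => /(congr1 (mcoeff m)); rewrite mcoeffX eqxx mcoeff0 => /eqP; rewrite oner_eq0.
Qed.

(* A divisor of a monomial is a monomial term: its lowest and highest
   monomials must coincide, since both contribute to the product. *)
Lemma monomial_factor p q m : p * q = 'X_[m] -> p = mleadc p *: 'X_[mlead p].
Proof.
move=> pqE.
have nz_p : p != 0 by apply: contra_eqN pqE => /eqP->; rewrite mul0r eq_sym mpolyX_neq0.
have nz_q : q != 0 by apply: contra_eqN pqE => /eqP->; rewrite mulr0 eq_sym mpolyX_neq0.
have coefX (m' : 'X_{1..n}) : (p * q)@_m' != 0 -> m' = m.
  by rewrite pqE mcoeffX; case: (@eqP _ m m') => [->|_] //; rewrite mulr0n eqxx.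
have lead_sum : (mlead p + mlead q)%MM = m.
  by apply: coefX; rewrite mleadcM mulf_neq0 ?mleadc_eq0.
have last_sum : (mlast p + mlast q)%MM = m.
  by apply: coefX; rewrite mcoeff_mlastM mulf_neq0 // -mcoeff_msupp mlast_supp.
have last_lead : mlast p = mlead p.
  apply/eqP; apply: contraT => ne.
  have lt : (mlast p < mlead p)%O by rewrite lt_neqAle ne msupp_le_mlead // mlast_supp.
  have := ltmc_le_add lt (msupp_le_mlead (mlast_supp nz_q)).
  by rewrite last_sum lead_sum ltxx.
apply/mpolyP => m0; rewrite mcoeffZ mcoeffX.
have [<-|ne] := eqVneq (mlead p) m0; first by rewrite mulr1.
rewrite mulr0; apply/eqP; rewrite mcoeff_eq0; apply: contra ne => m0p.
by rewrite eq_le msupp_le_mlead //= -last_lead mlast_lemc.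
Qed.

Lemma monomial_add_term m1 m2 m3 (c c' : R) :
  c != 0 -> 'X_[m1] + c *: 'X_[m2] = c' *: 'X_[m3] -> m2 = m1.
Proof.
move=> nz_c E; apply/eqP; apply: contraT => ne.
have := congr1 (mcoeff m1) E; have := congr1 (mcoeff m2) E.
rewrite !mcoeffD !mcoeffZ !mcoeffX !eqxx eq_sym (negbTE ne) mulr1 mulr0 add0r addr0.
case: (@eqP _ m3 m1) => [->|_]; last by rewrite mulr0 => _ /eqP; rewrite oner_eq0.
by rewrite [m1 == m2]eq_sym (negbTE ne) mulr0 => /eqP; rewrite (negbTE nz_c).
Qed.
End MonomialFactors.

Section LaurentPolynomials.
Variables (R : realType) (d : nat) (K : closedFieldType).
Variables (iota : {rmorphism CC R -> K}) (t : 'I_d -> K).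
(* t_1, ..., t_d are algebraically independent over C. *)
Hypothesis evt_inj : injective (evt iota t).

Local Notation ev := (evt iota t).
Local Notation Lam := (inLambda iota t).
Local Notation U := (unitLambda iota t).

Definition tmon : 'X_{1..d} := [multinom 1%N | _ < d].
Definition tprod : K := \prod_(l < d) t l.

Lemma evtD p q : ev (p + q) = ev p + ev q.
Proof. by rewrite /evt rmorphD. Qed.

Lemma evtM p q : ev (p * q) = ev p * ev q.
Proof. by rewrite /evt rmorphM. Qed.

Lemma evtZ c p : ev (c *: p) = iota c * ev p.
Proof. by rewrite /evt mmapZ. Qed.

Lemma evXtmon e : ev 'X_[tmon *+ e] = tprod ^+ e.
Proof.
rewrite /evt mmapX /mmap1 -prodrXl; apply: eq_bigr => l _.
by rewrite mulmnE mnmE mul1n.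
Qed.

Lemma tprod_neq0 : tprod != 0.
Proof.
apply: contra_neq (mpolyX_neq0 (CC R) (tmon *+ 1)) => tprod0.
by apply: evt_inj; rewrite evXtmon expr1 tprod0 /evt rmorph0.
Qed.

Lemma inLambdaC c : Lam (iota c).
Proof. by exists c%:MP, 0%N; rewrite /evt mmapC expr0 divr1. Qed.

Lemma inLambda1 : Lam 1.
Proof. by exists 1, 0%N; rewrite expr0 divr1 /evt rmorph1. Qed.

Lemma inLambdaM x y : Lam x -> Lam y -> Lam (x * y).
Proof.
move=> [p [a ->]] [q [b ->]]; exists (p * q), (a + b)%N.
by rewrite evtM exprD invfM mulrACA.
Qed.

Lemma inLambdaD x y : Lam x -> Lam y -> Lam (x + y).
Proof.
move=> [p [a ->]] [q [b ->]].
exists (p * 'X_[tmon *+ b] + q * 'X_[tmon *+ a]), (a + b)%N.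
rewrite evtD !evtM !evXtmon exprD.
by field; rewrite !expf_neq0 // tprod_neq0.
Qed.

Lemma inLambdaN x : Lam x -> Lam (- x).
Proof. by move=> Lx; rewrite -mulN1r -(rmorphN1 iota); apply/inLambdaM/Lx/inLambdaC. Qed.

Lemma inLambdaB x y : Lam x -> Lam y -> Lam (x - y).
Proof. by move=> Lx /inLambdaN; apply: inLambdaD. Qed.

Lemma unitLambdaM x y : U x -> U y -> U (x * y).
Proof.
move=> [Lx nz_x Lx'] [Ly nz_y Ly']; split; first exact: inLambdaM.
  by rewrite mulf_neq0.
by rewrite invfM; apply: inLambdaM.
Qed.

Lemma unitLambdaV x : U x -> U x^-1.
Proof. by move=> [Lx nz_x Lx']; split; rewrite ?invr_eq0 ?invrK. Qed.

Lemma unitLambda_factor x y : Lam x -> Lam y -> U (x * y) -> U x.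
Proof.
move=> Lx Ly [_ nz_xy Lxy'].
have nz_x : x != 0 by apply: contraNneq nz_xy => ->; rewrite mul0r.
have nz_y : y != 0 by apply: contraNneq nz_xy => ->; rewrite mulr0.
split => //; have -> : x^-1 = y * (x * y)^-1 by rewrite invfM mulrCA divff ?mulr1.
exact: inLambdaM.
Qed.

(* The numerator of a unit of Lambda is a monomial term: it divides a
   power of t_1 ... t_d in C[t]. *)
Lemma unitLambda_numerator x p a :
  U x -> x = ev p / tprod ^+ a -> p = mleadc p *: 'X_[mlead p].
Proof.
move=> [_ nz_x [p' [b Ex']]] Ex; apply: (@monomial_factor _ _ _ p' (tmon *+ (a + b))).
apply: evt_inj; rewrite evtM evXtmon exprD.
have Ep : ev p = x * tprod ^+ a by rewrite Ex mulfVK // expf_neq0 // tprod_neq0.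
have Ep' : ev p' = x^-1 * tprod ^+ b by rewrite Ex' mulfVK // expf_neq0 // tprod_neq0.
by rewrite Ep Ep' mulrACA divff ?mul1r.
Qed.

(* Key fact: if x and 1 + x are both units of Lambda, then x is a constant.
   Write x = p / T^a; then p and T^a + p are both monomial terms, which
   forces p to be a multiple of T^a. *)
Lemma unitLambda_shift_const x : U x -> U (1 + x) -> inC iota x.
Proof.
move=> Ux U1x; have [[p [a Ex]] nz_x _] := Ux.
have nzT : tprod ^+ a != 0 by rewrite expf_neq0 // tprod_neq0.
have E1x : 1 + x = ev ('X_[tmon *+ a] + p) / tprod ^+ a.
  by rewrite evtD evXtmon Ex mulrDl divff.
have Fp := unitLambda_numerator Ux Ex.
have Fr := unitLambda_numerator U1x E1x.
have nz_c : mleadc p != 0.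
  by apply: contraNneq nz_x => c0; rewrite Ex Fp c0 scale0r /evt rmorph0 mul0r.
have lead_p : mlead p = (tmon *+ a)%MM.
  by apply: (monomial_add_term nz_c); rewrite -Fp; exact: Fr.
by exists (mleadc p); rewrite Ex {1}Fp lead_p evtZ evXtmon mulfK.
Qed.

Lemma inC_div x y : inC iota x -> inC iota y -> inC iota (x / y).
Proof. by move=> [a ->] [b ->]; exists (a / b); rewrite fmorph_div. Qed.

Lemma inC_sign (c : K) : c ^+ 2 = 1 -> inC iota c.
Proof.
move/eqP; rewrite sqrf_eq1 => /orP[] /eqP ->.
  by exists 1; rewrite rmorph1.
by exists (-1); rewrite rmorphN1.
Qed.

Lemma inLambda_halves w z : Lam (w + z) -> Lam (w - z) -> Lam w /\ Lam z.
Proof.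
move=> Lsum Ldiff.
have two_nz : 2%:R != 0 :> K by rewrite -(rmorph_nat iota) fmorph_eq0 pnatr_eq0.
have Lw : Lam w.
  have -> : w = ((w + z) + (w - z)) * 2%:R^-1 by field.
  apply: inLambdaM; first exact: inLambdaD.
  by rewrite -(rmorph_nat iota) -fmorphV; apply: inLambdaC.
by split => //; rewrite -(addKr w z); apply: inLambdaD => //; apply: inLambdaN.
Qed.

(* If the discriminant
   (w + z)^2 - 4 u v = (w - z)^2 is a square in Lambda, then w and z lie
   in Lambda, and x = c w / u and 1 + x are units, so u / w is constant. *)
Lemma discriminant_ratio_const (c u v w z q : K) :
  c ^+ 2 = 1 -> U u -> U v -> U (u + v + c * (w + z)) -> w * z = u * v ->
  Lam q -> (w + z) ^+ 2 - 4%:R * (u * v) = q ^+ 2 -> inC iota (u / w).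
Proof.
move=> c_sq Uu Uv Usum wzE Lq discrE.
have [[Lu nz_u _] [Lv _ _] [Lsum _ _]] := And3 Uu Uv Usum.
have [a cE] := inC_sign c_sq.
have nz_c : c != 0.
  by apply/eqP => c0; move: c_sq; rewrite c0 expr2 mul0r => /eqP; rewrite eq_sym oner_eq0.
have Lc : Lam c by rewrite cE; apply: inLambdaC.
have Uc : U c by split => //; rewrite cE -fmorphV; apply: inLambdaC.
have Lwz : Lam (w + z).
  have -> : w + z = c * (u + v + c * (w + z) - u - v) by ring: c_sq.
  exact: inLambdaM Lc (inLambdaB (inLambdaB Lsum Lu) Lv).
have Ldiff : Lam (w - z).
  have : (w - z) ^+ 2 = q ^+ 2 by rewrite -discrE -wzE; ring.
  by move/eqP; rewrite eqf_sqr => /orP[] /eqP -> //; apply: inLambdaN.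
have [Lw Lz] := inLambda_halves Lwz Ldiff.
have Uw : U w by apply: (unitLambda_factor Lw Lz); rewrite wzE; apply: unitLambdaM.
have nz_w : w != 0 by case: Uw.
(* x and 1 + x = (u + v + c (w + z)) / (u + c z) are units *)
pose x := c * w / u.
have Ux : U x by apply: unitLambdaM; [apply: unitLambdaM | apply: unitLambdaV].
have U1x : U (1 + x).
  apply: (unitLambda_factor (y := u + c * z)).
  - by apply: inLambdaD; [apply: inLambda1 | case: Ux].
  - by apply: inLambdaD => //; apply: inLambdaM.
  suff -> : (1 + x) * (u + c * z) = u + v + c * (w + z) by [].
  by rewrite /x; field: c_sq wzE.
have [b xE] := unitLambda_shift_const Ux U1x.
have -> : u / w = c / x by rewrite /x; field: c_sq; rewrite nz_u nz_w nz_c.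
by apply: inC_div; [exists a | exists b].
Qed.

(* If the products d_I d_J and
   l_I l_J both expand as c1 d1 d2 + c2 d3 d4, resp. c1 l1 l2 + c2 l3 l4,
   with signs c1, c2, and all six h_X = l_X d_X are units, then the
   discriminant of the theorem equals (w + z)^2 - 4 u v for
   u = h1 h2, v = h3 h4, w = l1 l2 d3 d4, z = l3 l4 d1 d2; hence, if it
   is a square in Lambda, the cross-ratio d1 d2 / (d3 d4) = u / w is constant. *)
Lemma pluecker_ratio_const (dI dJ d1 d2 d3 d4 lI lJ l1 l2 l3 l4 c1 c2 q : K) :
  c1 ^+ 2 = 1 -> c2 ^+ 2 = 1 ->
  dI * dJ = c1 * (d1 * d2) + c2 * (d3 * d4) ->
  lI * lJ = c1 * (l1 * l2) + c2 * (l3 * l4) ->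
  U (lI * dI) -> U (lJ * dJ) -> U (l1 * d1) -> U (l2 * d2) ->
  U (l3 * d3) -> U (l4 * d4) -> Lam q ->
  ((lI * dI) * (lJ * dJ) - (l1 * d1) * (l2 * d2) - (l3 * d3) * (l4 * d4)) ^+ 2
    - 4%:R * (l1 * d1) * (l2 * d2) * (l3 * d3) * (l4 * d4) = q ^+ 2 ->
  inC iota (d1 * d2 / (d3 * d4)).
Proof.
move=> c1_sq c2_sq dE lE UI UJ U1 U2 U3 U4 Lq discrE.
have c_sq : (c1 * c2) ^+ 2 = 1 by rewrite exprMn c1_sq c2_sq mulr1.
have prodE : (lI * dI) * (lJ * dJ) = (l1 * d1) * (l2 * d2) + (l3 * d3) * (l4 * d4)
    + c1 * c2 * (l1 * l2 * (d3 * d4) + l3 * l4 * (d1 * d2)).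
  by rewrite mulrACA lE dE; ring: c1_sq c2_sq.
have := @discriminant_ratio_const (c1 * c2) ((l1 * d1) * (l2 * d2))
  ((l3 * d3) * (l4 * d4)) (l1 * l2 * (d3 * d4)) (l3 * l4 * (d1 * d2)) q c_sq.
have factors_nz l x : U (l * x) -> l != 0 /\ x != 0.
  by case=> _ + _; rewrite mulf_eq0 negb_or => /andP.
have [[nz_l1 _] [nz_l2 _] [_ nz_d3] [_ nz_d4]] := And4 (factors_nz _ _ U1)
  (factors_nz _ _ U2) (factors_nz _ _ U3) (factors_nz _ _ U4).
have -> : l1 * d1 * (l2 * d2) / (l1 * l2 * (d3 * d4)) = d1 * d2 / (d3 * d4).
  by field; rewrite nz_l1 nz_l2 nz_d3 nz_d4.
apply.
- exact: unitLambdaM.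
- exact: unitLambdaM.
- by rewrite -prodE; apply: unitLambdaM.
- by ring.
- exact: Lq.
by rewrite -discrE prodE; ring: c_sq.
Qed.
End LaurentPolynomials.

Lemma det_row_functional (F : fieldType) p (A : 'M[F]_p) (i0 : 'I_p) :
  exists c : 'cV[F]_p, forall y : 'rV[F]_p,
    \det (\matrix_(r, j) (if r == i0 then y 0 j else A r j)) = (y *m c) 0 0.
Proof.
exists (\col_j cofactor A i0 j) => y.
rewrite (expand_det_row _ i0) !mxE; apply: eq_bigr => j _; rewrite !mxE eqxx.
congr (_ * _); rewrite /cofactor; congr (_ * \det _).
by apply/matrixP => a b; rewrite !mxE eq_sym (negbTE (neq_lift _ _)).
Qed.

Section TwoRowDeterminant.
Variables (F : fieldType) (m : nat).
Local Notation k := m.+2.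

Definition penult : 'I_k := inord m.

Lemma penult_neq_max : penult != ord_max.
Proof. by rewrite -val_eqE /= inordK ?(ltn_eqF (ltnSn m)) // ltnS leqnSn. Qed.

Definition with_last2 (W : 'M[F]_k) (x y : 'rV[F]_k) : 'M[F]_k :=
  \matrix_(r, c) (if r == ord_max then y 0 c else if r == penult then x 0 c else W r c).
Definition omega W x y := \det (with_last2 W x y).

Lemma omega_linr W x : exists c : 'cV[F]_k, forall y, omega W x y = (y *m c) 0 0.
Proof.
have [c Hc] := det_row_functional (with_last2 W x 0) ord_max.
exists c => y; rewrite -Hc /omega; congr (\det _); apply/matrixP => r c'.
by rewrite !mxE; case: eqP.
Qed.

Lemma omega_linl W y : exists c : 'cV[F]_k, forall x, omega W x y = (x *m c) 0 0.
Proof.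
have [c Hc] := det_row_functional (with_last2 W 0 y) penult.
exists c => x; rewrite -Hc /omega; congr (\det _); apply/matrixP => r c'.
rewrite !mxE; have [->|//] := eqVneq r penult.
by rewrite (negbTE penult_neq_max).
Qed.

Lemma omega_xx W x : omega W x x = 0.
Proof.
apply: (determinant_alternate penult_neq_max) => c; rewrite !mxE eqxx.
by rewrite !eqxx; case: ifP.
Qed.

Lemma omega_rowl W r y : r != penult -> r != ord_max -> omega W (row r W) y = 0.
Proof.
move=> r_pen r_max; apply: (determinant_alternate r_pen) => c; rewrite !mxE.
by rewrite (negbTE r_pen) (negbTE r_max) (negbTE penult_neq_max) eqxx.
Qed.

Lemma omega_rowr W r x : r != penult -> r != ord_max -> omega W x (row r W) = 0.
Proof.
move=> r_pen r_max; apply: (determinant_alternate r_max) => c; rewrite !mxE.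
by rewrite (negbTE r_pen) (negbTE r_max) eqxx.
Qed.

Lemma omega_skew W x y : omega W y x = - omega W x y.
Proof.
have [cx Hx] := omega_linr W x; have [cy Hy] := omega_linr W y.
have [e He] := omega_linl W (x + y).
have split_l : omega W (x + y) (x + y) = omega W x (x + y) + omega W y (x + y).
  by rewrite !He mulmxDl mxE.
have split_x : omega W x (x + y) = omega W x x + omega W x y.
  by rewrite !Hx mulmxDl mxE.
have split_y : omega W y (x + y) = omega W y x + omega W y y.
  by rewrite !Hy mulmxDl mxE.
have := omega_xx W (x + y).
rewrite split_l split_x split_y !omega_xx add0r addr0 => sum0.
by apply/eqP; rewrite -addr_eq0 addrC sum0.
Qed.

Lemma functional_vanish W a b (f : 'rV[F]_k -> F) (c : 'cV[F]_k) :
  omega W a b != 0 -> (forall y, f y = (y *m c) 0 0) -> f a = 0 -> f b = 0 ->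
  (forall r, r != penult -> r != ord_max -> f (row r W) = 0) -> forall y, f y = 0.
Proof.
move=> nz fE fa fb fW.
have Mc : with_last2 W a b *m c = 0.
  apply/matrixP => r j; rewrite [j]ord1 [in RHS]mxE.
  rewrite (_ : _ r 0 = (row r (with_last2 W a b) *m c) 0 0); last first.
    by rewrite -row_mul [RHS]mxE.
  rewrite -fE.
  have [->|r_max] := eqVneq r ord_max.
    by rewrite (_ : row _ _ = b) //; apply/rowP => j'; rewrite !mxE eqxx.
  have [->|r_pen] := eqVneq r penult.
    rewrite (_ : row _ _ = a) //; apply/rowP => j'.
    by rewrite !mxE (negbTE penult_neq_max) eqxx.
  rewrite (_ : row _ _ = row r W) ?fW //; apply/rowP => j'.
  by rewrite !mxE (negbTE r_max) (negbTE r_pen).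
have unit_M : with_last2 W a b \in unitmx by rewrite unitmxE unitfE.
have c0 : c = 0 by rewrite -(mulKmx unit_M c) Mc mulmx0.
by move=> y; rewrite fE c0 mulmx0 mxE.
Qed.

Lemma omega_pluecker W x1 x2 x3 x4 :
  omega W x1 x2 * omega W x3 x4 - omega W x1 x3 * omega W x2 x4
    + omega W x1 x4 * omega W x2 x3 = 0.
Proof.
have [c4 H4] := omega_linl W x4; have [c1 H1] := omega_linr W x1.
have [c2 H2] := omega_linr W x2.
set e12 := omega W x1 x2; set e24 := omega W x2 x4; set e14 := omega W x1 x4.
pose f y := e12 * omega W y x4 - omega W x1 y * e24 + e14 * omega W x2 y.
have fE y : f y = (y *m (e12 *: c4 - e24 *: c1 + e14 *: c2)) 0 0.
  by rewrite /f mulmxDr mulmxBr -!scalemxAr H4 H1 H2 !mxE; ring.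
have fW r : r != penult -> r != ord_max -> f (row r W) = 0.
  by move=> r_pen r_max; rewrite /f omega_rowl // !omega_rowr // !mulr0 mul0r subrr addr0.
have f1 : f x1 = 0 by rewrite /f /= omega_xx (omega_skew W x1 x2) -/e12 -/e14; ring.
have f2 : f x2 = 0 by rewrite /f /= omega_xx -/e12 -/e24; ring.
have f4 : f x4 = 0 by rewrite /f /= omega_xx -/e14 -/e24; ring.
rewrite [LHS](_ : _ = f x3) //.
have [z12|nz12] := eqVneq e12 0; last exact: (functional_vanish nz12 fE).
have [z14|nz14] := eqVneq e14 0; last exact: (functional_vanish nz14 fE).
rewrite /f z12 z14 !mul0r sub0r addr0.
have [z24|nz24] := eqVneq e24 0; first by rewrite z24 mulr0 oppr0.
rewrite (@functional_vanish W x2 x4 (omega W x1) c1 nz24 H1 _ _ _ x3) ?mul0r ?oppr0 //.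
by move=> r r_pen r_max; rewrite omega_rowr.
Qed.
End TwoRowDeterminant.

Lemma ith_nth n p (S : {set 'I_n}) (r : 'I_p) x0 :
  (r < #|S|)%N -> ith S r = Some (nth x0 (enum S) r).
Proof. by move=> lt_r; rewrite /ith (nth_map x0) // -cardE. Qed.

Section MinorsBySubsets.
Variables (F : fieldType) (n p : nat).

Lemma DeltaL_tr (L : 'M[F]_(p, n)) J : DeltaL L J = DeltaR L^T J.
Proof.
rewrite /DeltaL /DeltaR -det_tr; congr (\det _); apply/matrixP => a b.
by rewrite !mxE; case: ith => // j; rewrite mxE.
Qed.

Lemma DeltaR_rowsub (J : {set 'I_n}) (g : 'I_p -> 'I_n) :
  #|J| = p -> injective g -> (forall r, g r \in J) ->
  exists e : F, e ^+ 2 = 1 /\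
    forall A : 'M[F]_(n, p), DeltaR A J = e * \det (rowsub g A).
Proof.
move=> cardJ g_inj gJ.
pose f r := odflt (g r) (ith J r).
have size_J : size (enum J) = p by rewrite -cardE.
have ithE r : ith J r = Some (nth (g r) (enum J) r) by rewrite (ith_nth (g r)) // cardJ.
have imgE : [set g r | r : 'I_p] = J.
  apply/eqP; rewrite eqEcard card_imset // card_ord cardJ leqnn andbT.
  by apply/subsetP => _ /imsetP[r _ ->].
pose s r := odflt r [pick r' | g r' == f r].
have gs r : g (s r) = f r.
  rewrite /s; case: pickP => [r' /eqP // | none].
  have : f r \in J by rewrite /f ithE /= -mem_enum mem_nth // size_J.
  by rewrite -imgE => /imsetP[r' _ fr]; move: (none r'); rewrite -fr eqxx.
have s_inj : injective s.
  move=> r1 r2 /(congr1 g); rewrite !gs /f !ithE /=.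
  rewrite [in RHS](set_nth_default (g r1)) ?size_J // => /eqP.
  by rewrite nth_uniq ?size_J ?enum_uniq // => /eqP /ord_inj.
exists ((-1) ^+ perm s_inj); split; first exact: sqrr_sign.
move=> A; rewrite -det_perm -det_mulmx -row_permE; congr (\det _).
by apply/matrixP => a b; rewrite !mxE permE gs /f ithE.
Qed.
End MinorsBySubsets.

Section PairFrame.
Variables (F : fieldType) (n m : nat) (S : {set 'I_n}).
Hypothesis cardS : #|S| = m.

Definition frame (A : 'M[F]_(n, m.+2)) : 'M[F]_m.+2 :=
  \matrix_(r, c) (if ith S r is Some s then A s c else 0).

Definition frame_rows (a b : 'I_n) (r : 'I_m.+2) : 'I_n := nth a (enum S ++ [:: a; b]) r.

Lemma frame_index_lt (r : 'I_m.+2) : r != ord_max -> r != penult m -> (r < m)%N.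
Proof.
rewrite -!val_eqE /= inordK ?ltnS ?leqnSn //.
by have := ltn_ord r; lia.
Qed.

Lemma frame_rowsE (A : 'M[F]_(n, m.+2)) a b :
  rowsub (frame_rows a b) A = with_last2 (frame A) (row a A) (row b A).
Proof.
have size_S : size (enum S) = m by rewrite -cardE.
apply/matrixP => r c; rewrite !mxE /frame_rows nth_cat size_S.
have [->|r_max] := eqVneq r ord_max; first by rewrite /= ltnNge leqnSn subSnn.
have [->|r_pen] := eqVneq r (penult m).
  by rewrite /= inordK ?ltnn ?subnn // ltnS leqnSn.
by rewrite frame_index_lt // (ith_nth a) ?cardS ?frame_index_lt.
Qed.

Lemma frame_rows_inj a b : a != b -> a \notin S -> b \notin S -> injective (frame_rows a b).
Proof.
move=> ab aS bS r1 r2 /eqP; rewrite /frame_rows nth_uniq.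
- by move/eqP/ord_inj.
- by rewrite size_cat -cardE cardS addn2.
- by rewrite size_cat -cardE cardS addn2.
by rewrite cat_uniq enum_uniq /= !inE negb_or ab !mem_enum aS orbF bS.
Qed.

Lemma DeltaR_frame (J : {set 'I_n}) a b :
  #|J| = m.+2 -> a != b -> a \notin S -> b \notin S ->
  a \in J -> b \in J -> S \subset J ->
  exists e : F, e ^+ 2 = 1 /\ forall A : 'M[F]_(n, m.+2),
    DeltaR A J = e * omega (frame A) (row a A) (row b A).
Proof.
move=> cardJ ab aS bS aJ bJ SJ.
have rowsJ r : frame_rows a b r \in J.
  have : frame_rows a b r \in enum S ++ [:: a; b].
    by rewrite mem_nth // size_cat -cardE cardS addn2.
  by rewrite mem_cat mem_enum !inE => /orP[/(subsetP SJ)|/orP[]/eqP->].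
have [e [e_sq eE]] := DeltaR_rowsub F cardJ (frame_rows_inj ab aS bS) rowsJ.
by exists e; split => // A; rewrite eE frame_rowsE.
Qed.
End PairFrame.

Lemma card_swap1 n (I : {set 'I_n}) x y :
  x \in I -> y \notin I -> #|swap1 I x y| = #|I|.
Proof. by move=> xI yI; rewrite cardsU1 (cardsD1 x I) xI in_setD1 (negbTE yI) andbF. Qed.

Lemma card_setD2 n (I : {set 'I_n}) i j :
  i \in I -> j \in I -> i != j -> #|I| = #|I :\: [set i; j]|.+2.
Proof.
move=> iI jI ij; have ji : j \in I :\ i by rewrite in_setD1 eq_sym ij.
rewrite (cardsD1 i I) iI (cardsD1 j (I :\ i)) ji; congr (_.+2); apply: eq_card => x.
by rewrite !inE negb_or andbA [(x != j) && _]andbC.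
Qed.

Lemma card_swap2 n (I : {set 'I_n}) i j al be :
  i \in I -> j \in I -> i != j -> al \notin I -> be \notin I -> al != be ->
  #|swap2 I i j al be| = #|I|.
Proof.
move=> iI jI ij alI beI albe; rewrite (card_setD2 iI jI ij) cardsU1 cardsU1.
by rewrite !in_setU1 !in_setD (negbTE albe) (negbTE alI) (negbTE beI) !andbF.
Qed.

Lemma swap1_frame n (I T : {set 'I_n}) x y z :
  z \in I -> z != x -> x \in T ->
  [/\ z \in swap1 I x y, y \in swap1 I x y & I :\: T \subset swap1 I x y].
Proof.
move=> zI zx xT; rewrite /swap1 !in_setU1 in_setD1 eqxx zx zI orbT; split => //.
apply/subsetP => w; rewrite !inE => /andP[wT ->]; rewrite andbT.
by apply/orP; right; apply: contraNneq wT => ->.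
Qed.

Lemma DeltaR_swap1_frame (F : fieldType) n (I : {set 'I_n}) i j x y z :
  i \in I -> j \in I -> i != j ->
  x \in [set i; j] -> z \in [set i; j] -> z != x -> y \notin I ->
  exists e : F, e ^+ 2 = 1 /\
    forall A : 'M[F]_(n, #|I :\: [set i; j]|.+2),
      DeltaR A (swap1 I x y) =
      e * omega (frame (I :\: [set i; j]) A) (row z A) (row y A).
Proof.
move=> iI jI ij xT zT zx yI.
have TI : [set i; j] \subset I by rewrite subUset !sub1set iI jI.
have [xI zI] := conj (subsetP TI x xT) (subsetP TI z zT).
have [zJ yJ SJ] := swap1_frame y zI zx xT.
apply: (DeltaR_frame F (erefl _) _ _ _ _ zJ yJ SJ).
- by rewrite card_swap1 // (card_setD2 iI jI ij).
- by apply: contraNneq yI => <-.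
- by rewrite in_setD zT.
- by rewrite !inE (negbTE yI) andbF.
Qed.

Lemma pluecker_signs (F : fieldType) (wij wab wia wjb wib wja e1 e2 e3 e4 e5 e6 : F) :
  e3 ^+ 2 = 1 -> e4 ^+ 2 = 1 -> e5 ^+ 2 = 1 -> e6 ^+ 2 = 1 ->
  wij * wab - wia * wjb + wib * wja = 0 ->
  (e1 * wij) * (e2 * wab) = - (e1 * e2 * e3 * e4) * ((e3 * wja) * (e4 * wib))
     + (e1 * e2 * e5 * e6) * ((e5 * wjb) * (e6 * wia)).
Proof.
move=> e3_sq e4_sq e5_sq e6_sq pl.
have wE : wij * wab = wia * wjb - wib * wja by rewrite -[LHS]subr0 -pl; ring.
transitivity (e1 * e2 * (- (e3 ^+ 2 * e4 ^+ 2) * (wib * wja) + e5 ^+ 2 * e6 ^+ 2 * (wia * wjb))).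
  by rewrite e3_sq e4_sq e5_sq e6_sq !mul1r -[LHS]mulrACA wE; ring.
by ring.
Qed.

Lemma DeltaR_pluecker (F : fieldType) n p (I : {set 'I_n}) i j al be :
  #|I| = p -> i \in I -> j \in I -> i != j -> al \notin I -> be \notin I -> al != be ->
  exists c1 c2 : F, [/\ c1 ^+ 2 = 1, c2 ^+ 2 = 1 & forall A : 'M[F]_(n, p),
    DeltaR A I * DeltaR A (swap2 I i j al be) =
      c1 * (DeltaR A (swap1 I i al) * DeltaR A (swap1 I j be))
    + c2 * (DeltaR A (swap1 I i be) * DeltaR A (swap1 I j al))].
Proof.
move=> cardI iI jI ij alI beI albe.
have {cardI} -> : p = #|I :\: [set i; j]|.+2 by rewrite -cardI (card_setD2 iI jI ij).
set S := I :\: [set i; j].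
have [iS jS] : i \notin S /\ j \notin S by rewrite !inE !eqxx orbT.
have [alS beS] : al \notin S /\ be \notin S by rewrite !inE (negbTE alI) (negbTE beI) !andbF.
have ji : j != i by rewrite eq_sym.
have T_i : i \in [set i; j] by rewrite !inE eqxx.
have T_j : j \in [set i; j] by rewrite !inE eqxx orbT.
have [e1 [e1_sq E1]] :=
  DeltaR_frame F (erefl #|S|) (card_setD2 iI jI ij) ij iS jS iI jI (subsetDl _ _).
have [e2 [e2_sq E2]] : exists e : F, e ^+ 2 = 1 /\ forall A : 'M[F]_(n, #|S|.+2),
    DeltaR A (swap2 I i j al be) = e * omega (frame S A) (row al A) (row be A).
  apply: (DeltaR_frame F (erefl #|S|)) => //.
  - by rewrite card_swap2 // (card_setD2 iI jI ij).
  - by rewrite !inE eqxx.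
  - by rewrite !inE eqxx orbT.
  - by apply/subsetP => w wS; rewrite /swap2 !in_setU1 wS !orbT.
have [e3 [e3_sq E3]] := DeltaR_swap1_frame F iI jI ij T_i T_j ji alI.
have [e4 [e4_sq E4]] := DeltaR_swap1_frame F iI jI ij T_j T_i ij beI.
have [e5 [e5_sq E5]] := DeltaR_swap1_frame F iI jI ij T_i T_j ji beI.
have [e6 [e6_sq E6]] := DeltaR_swap1_frame F iI jI ij T_j T_i ij alI.
exists (- (e1 * e2 * e3 * e4)), (e1 * e2 * e5 * e6); split.
- by rewrite sqrrN !exprMn e1_sq e2_sq e3_sq e4_sq !mul1r.
- by rewrite !exprMn e1_sq e2_sq e5_sq e6_sq !mul1r.
move=> A; rewrite E1 E2 E3 E4 E5 E6; apply: pluecker_signs => //.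
exact: omega_pluecker.
Qed.

Theorem mainTheorem5 (R : realType) (d : nat) (K : closedFieldType)
  (iota : {rmorphism CC R -> K}) (t : 'I_d -> K)
  (hd : (0 < d)%N)
  (hK : is_alg_closure_of_FracLambda iota t)
  (k n : nat) (hk : (1 <= k <= n)%N)
  (L : 'M[K]_(k, n)) (Rm : 'M[K]_(n, k))
  (SA1 : forall J : {set 'I_n}, #|J| = k -> DeltaR Rm J != 0)
  (SA2 : forall J : {set 'I_n}, #|J| = k -> DeltaL L J != 0 ->
           unitLambda iota t (hh L Rm J))
  (I : {set 'I_n}) (hI : #|I| = k) (i j al be : 'I_n)
  (hi : i \in I) (hj : j \in I) (hij : i != j)
  (hal : al \notin I) (hbe : be \notin I) (halbe : al != be)
  (hnz : hh L Rm I * hh L Rm (swap2 I i j al be)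
         * hh L Rm (swap1 I i al) * hh L Rm (swap1 I i be)
         * hh L Rm (swap1 I j al) * hh L Rm (swap1 I j be) != 0) :
  (exists q : K, inLambda iota t q /\ Bcoef L Rm I i j al be = q ^+ 2) ->
  inC iota (Ycoef Rm I i j al be).
Proof.
move=> [q [Lq discrE]].
have evt_inj : injective (evt iota t) by case: hK.
have [c1 [c2 [c1_sq c2_sq plueckerE]]] := DeltaR_pluecker K hI hi hj hij hal hbe halbe.
have dE := plueckerE Rm.
have lE := plueckerE L^T; rewrite -!DeltaL_tr in lE.
have card1 x y : x \in I -> y \notin I -> #|swap1 I x y| = k.
  by move=> xI yI; rewrite card_swap1.
have card2 : #|swap2 I i j al be| = k by rewrite card_swap2.
move: hnz; rewrite !mulf_eq0 !negb_or => /andP[/andP[/andP[/andP[/andP[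
  /andP[nzI _] /andP[nz2 _]] /andP[nz3 _]] /andP[nz5 _]] /andP[nz6 _]] /andP[nz4 _]].
have [a ratioE] := pluecker_ratio_const evt_inj c1_sq c2_sq dE lE
  (SA2 _ hI nzI) (SA2 _ card2 nz2) (SA2 _ (card1 _ _ hi hal) nz3)
  (SA2 _ (card1 _ _ hj hbe) nz4) (SA2 _ (card1 _ _ hi hbe) nz5)
  (SA2 _ (card1 _ _ hj hal) nz6) Lq discrE.
exists (- (sgnY i j al be)%:~R * a).
by rewrite rmorphM rmorphN rmorph_int -ratioE /Ycoef mulrA.
Qed.
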